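(* For every positive integer $k$, $\mathrm{mad}_{\delta^+}(C(k,1))=\mathrm{mad}_{\delta^0}(C(k,1))=k$.
   Context: $C(k_1,k_2)$ is the union of two internally disjoint directed paths of lengths $k_1$ and $k_2$ with the same initial and terminal vertices. A subdivision of a digraph $F$ is obtained by replacing each arc $(x,y)$ by a directed $(x,y)$-path, internally disjoint with new internal vertices. $\delta^+(D)$ is the minimum out-degree, $\delta^-(D)$ the minimum in-degree, and $\delta^0(D)=\min\{\delta^+(D),\delta^-(D)\}$. For a digraph parameter $\gamma$, $\mathrm{mad}_\gamma(F)$ is the least integer $c$ such that every digraph $D$ with $\gamma(D)\ge c$ contains a subdivision of $F$ as a subdigraph. *)

From mathcomp Require Import all_boot.
Set Implicit Arguments. Unset Strict Implicit. Unset Printing Implicit Defensive.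

(* A (finite) digraph: a finite vertex set with an arc relation; loopless,
   no parallel arcs (arcs form a relation); digons are allowed. *)
Record digraph := Digraph {
  dV :> finType;
  darc : rel dV;
  darc_irr : irreflexive darc }.

Definition outdeg (D : digraph) (v : D) : nat := #|[set w | darc v w]|.
Definition indeg (D : digraph) (v : D) : nat := #|[set w | darc w v]|.

(* minimum out-/in-degree; for the empty digraph the value is 0 *)
Definition delta_plus (D : digraph) : nat :=
  \big[minn/#|dV D|]_(v : dV D) outdeg v.
Definition delta_minus (D : digraph) : nat :=
  \big[minn/#|dV D|]_(v : dV D) indeg v.
Definition delta_zero (D : digraph) : nat := minn (delta_plus D) (delta_minus D).

(* D contains a subdivision of the digraph F = (FV, FA) as a subdigraph:
   an injective map f of branch vertices, and for each arc (u,v) of F a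
   directed (f u, f v)-path in D with internal vertex sequence P u v; the
   internal vertices avoid the branch vertices and are pairwise disjoint
   between different arcs. *)
Definition contains_subdivision (FV : finType) (FA : rel FV) (D : digraph) : Prop :=
  exists (f : FV -> dV D) (P : FV -> FV -> seq (dV D)),
    [/\ injective f,
        (forall u v, FA u v ->
           [/\ path (@darc D) (f u) (rcons (P u v) (f v)),
               uniq (P u v) &
               forall w, w \in P u v -> w \notin codom f]) &
        (forall u v u' v', FA u v -> FA u' v' -> (u, v) <> (u', v') ->
           forall w, w \in P u v -> w \notin P u' v')].

(* C(k1,k2): vertices 'I_(k1+k2); 0 = common initial vertex, 1 = common
   terminal vertex; 2..k1 internal vertices of the first path (length k1),
   k1+1..k1+k2-1 internal vertices of the second path (length k2). *)
Definition C_path1 (k1 : nat) : seq nat := 0 :: iota 2 k1.-1 ++ [:: 1].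
Definition C_path2 (k1 k2 : nat) : seq nat := 0 :: iota k1.+1 k2.-1 ++ [:: 1].
Definition arcs_of (s : seq nat) : seq (nat * nat) := zip s (behead s).

Definition CV (k1 k2 : nat) : finType := 'I_(k1 + k2).
Definition CA (k1 k2 : nat) : rel (CV k1 k2) :=
  fun u v => ((val u, val v) \in arcs_of (C_path1 k1))
          || ((val u, val v) \in arcs_of (C_path2 k1 k2)).

(* c is mad_gamma(F): the least integer c such that every digraph D with
   gamma(D) >= c contains a subdivision of F (gamma is nat-valued, so it
   suffices to range over nat). *)
Definition mad_prop (gamma : digraph -> nat) (FV : finType) (FA : rel FV) (c : nat) : Prop :=
  forall D : digraph, c <= gamma D -> contains_subdivision FA D.

Definition is_mad (gamma : digraph -> nat) (FV : finType) (FA : rel FV) (c : nat) : Prop :=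
  mad_prop gamma FA c /\ forall c', mad_prop gamma FA c' -> c <= c'.

From mathcomp Require Import all_boot all_order zify.
Set Implicit Arguments. Unset Strict Implicit. Unset Printing Implicit Defensive.
Import Order.TTheory.

(* Upper bound: if every out-degree is at least k, follow a maximal directed
   path ending at y.  All out-neighbours of y lie on the path; going from the
   first of them to one sitting at least k - 1 steps later gives a path
   y -> ... -> z of length at least k together with the arc y -> z, i.e. a
   subdivision of C(k,1).  Lower bound: the complete digraph on k vertices
   has minimum in- and out-degree k - 1 but fewer vertices than C(k,1). *)

Lemma bigminn_geP (I : finType) (x m : nat) (F : I -> nat) :
  reflect (m <= x /\ forall i, m <= F i) (m <= \big[minn/x]_i F i).
Proof.
apply: (iffP (@bigmin_geP _ nat _ x m xpredT F)).
  by case=> hm hF; split=> // i; apply: hF.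
by case=> hm hF; split=> // i _; apply: hF.
Qed.

Lemma path_nth_drop (T : Type) (e : rel T) x s n :
  path e x s -> n <= size s -> path e (nth x (x :: s) n) (drop n s).
Proof.
elim: s x n => [|z s IH] x [|n] //= /andP[_ zs] n_le.
by rewrite (set_nth_default z) //; apply: IH.
Qed.

Lemma index_drop_take (T : eqType) (s : seq T) i j x :
  uniq s -> x \in drop i (take j s) -> i <= index x s < j.
Proof.
move=> s_uniq /(nthP x)[t]; rewrite size_drop size_take_min => t_lt <-.
rewrite nth_drop nth_take ?index_uniq //; lia.
Qed.

Lemma exists_late_mem (T : finType) (A : {set T}) (t : seq T) :
  {subset A <= t} -> 0 < #|A| -> exists2 z, z \in A & #|A| <= (index z t).+1.
Proof.
move=> At A_gt0; apply/exists_inP/contraT => /exists_inPn early.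
have : #|A| <= size (take #|A|.-1 t).
  apply: leq_trans (card_size _); apply/subset_leq_card/subsetP => z zA.
  by rewrite in_take ?At //; move: (early z zA); lia.
rewrite size_take_min; lia.
Qed.

Lemma arcs_of_iota m n a b : (a, b) \in arcs_of (iota m n) -> b = a.+1.
Proof.
elim: n m => [|[|n] IH] m //=.
rewrite /arcs_of /= in_cons => /orP[/eqP[-> ->] // | ].
exact: IH.
Qed.

Lemma arcs_of_map (f : nat -> nat) s :
  arcs_of (map f s) = map (fun p => (f p.1, f p.2)) (arcs_of s).
Proof. by elim: s => [|x [|y s] IH] //; rewrite /arcs_of /= in IH *; rewrite IH. Qed.

(* Position of a vertex of C(k,1) along its path of length k. *)
Definition cpos (k n : nat) : nat := if n == 0 then 0 else if n == 1 then k else n.-1.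

Lemma map_cpos_C_path1 k : 0 < k -> map (cpos k) (C_path1 k) = iota 0 k.+1.
Proof.
move=> k_gt0; rewrite /C_path1 map_cons map_cat /=.
rewrite -[2]/(1 + 1) iotaDl -map_comp map_id_in; last first.
  by move=> n /[!mem_iota] n_ge1; rewrite /cpos /=; case: n n_ge1.
by case: k k_gt0 => // k _; rewrite /cpos /= -[[:: k.+1]]/(iota (1 + k) 1) -iotaD addn1.
Qed.

Lemma CA_cpos k (a b : CV k 1) : 0 < k -> CA a b ->
  cpos k b = (cpos k a).+1 \/ (val a, val b) = (0, 1).
Proof.
move=> k_gt0 /orP[ab1 | ]; last by rewrite inE => /eqP; right.
left; apply: (@arcs_of_iota 0 k.+1); rewrite -(map_cpos_C_path1 k_gt0) arcs_of_map.
exact: (map_f (fun p => (cpos k p.1, cpos k p.2)) ab1).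
Qed.

Lemma cpos_inj k : injective (fun x : CV k 1 => cpos k x).
Proof.
move=> a b; rewrite /cpos => eq_ab; apply: val_inj => /=.
move: eq_ab (ltn_ord a) (ltn_ord b).
by case: (val a) => [|[|a']]; case: (val b) => [|[|b']] /=; lia.
Qed.

Lemma cpos_le k (x : CV k 1) : cpos k x <= k.
Proof. by rewrite /cpos; case: (val x) (ltn_ord x) => [|[|x']] /=; lia. Qed.

Lemma subdivision_of_chorded_path (D : digraph) k (y : D) (s : seq D) :
  0 < k -> k <= size s -> path (@darc D) y s -> uniq (y :: s) ->
  darc y (last y s) -> contains_subdivision (@CA k 1) D.
Proof.
move=> k_gt0 k_le_s ys_path ys_uniq chord.
(* Positions 0 .. k-1 of C(k,1) go to the first k vertices of y :: s, the
   terminal vertex to its last one; only the arc entering the terminal vertex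
   from position k-1 is subdivided; for k > 1 the chord realises the arc (0, 1). *)
set w := y :: s.
pose stretch n := if n < k then n else size s.
pose f (x : CV k 1) := nth y w (stretch (cpos k x)).
pose P (a b : CV k 1) :=
  if ((cpos k a).+1 == k) && (cpos k b == k) then drop k (take (size s) w) else [::].
have stretch_lt n : stretch n < size w.
  by rewrite /stretch; case: ifP => /=; lia.
have index_f x : index (f x) w = stretch (cpos k x) by rewrite index_uniq.
have P_index a b u : u \in P a b -> k <= index u w < size s.
  by rewrite /P; case: ifP => // _; apply: index_drop_take.
exists f, P; split.
- move=> a b /(congr1 (index^~ w)); rewrite !index_f => eq_ab; apply: cpos_inj.
  by move: eq_ab (cpos_le a) (cpos_le b); rewrite /stretch; do 2!case: ifP; lia.
- move=> a b ab; split.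
  + rewrite /P; case: ifPn => [/andP[/eqP ak /eqP bk] | notP].
      have -> : f a = nth y w (cpos k a) by rewrite /f /stretch -[X in _ < X]ak ltnSn.
      have -> : f b = nth y w (size s) by rewrite /f /stretch bk ltnn.
      rewrite -drop_rcons ?size_takel // -take_nth // take_oversize // -[in drop k _]ak /=.
      by apply: path_nth_drop; lia.
    case: (CA_cpos k_gt0 ab) => [ab_next | [a0 b1]].
      have b_lt : cpos k b < k by move: notP (cpos_le b); rewrite ab_next; lia.
      have a_lt : cpos k a < k by rewrite -ab_next ltnW.
      rewrite /= andbT /f /stretch a_lt b_lt ab_next.
      by move/(pathP y): ys_path; apply; lia.
    by rewrite /= andbT /f /stretch /cpos a0 b1 /= k_gt0 ltnn -[size s]/(size w).-1 nth_last.
  + by rewrite /P; case: ifP => // _; apply/drop_uniq/take_uniq.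
  + move=> u /P_index u_idx; apply/codomP => -[x ux].
    by move: u_idx; rewrite ux index_f /stretch; case: ifP; lia.
- move=> a b a' b' _ _ neq u; rewrite /P.
  case: ifP => // /andP[/eqP ak /eqP bk]; case: ifP => // /andP[/eqP ak' /eqP bk'].
  by case: neq; congr pair; apply: cpos_inj; lia.
Qed.

Lemma exists_maximal_path (D : digraph) (x : D) :
  exists q y, [/\ sorted (@darc D) (rcons q y), uniq (rcons q y) &
                  forall z, darc y z -> z \in q].
Proof.
have size_lt (q : seq D) (y : D) : uniq (rcons q y) -> size q < #|D|.
  by move/card_uniqP; rewrite size_rcons => <-; apply: max_card.
suff grow n q y : #|D| - size q <= n -> sorted (@darc D) (rcons q y) ->
    uniq (rcons q y) -> exists q' y', [/\ sorted (@darc D) (rcons q' y'),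
      uniq (rcons q' y') & forall z, darc y' z -> z \in q'].
  by apply: (grow #|D| [::] x); rewrite ?subn0.
elim: n q y => [|n IH] q y n_ge q_sorted q_uniq.
  by have := size_lt q y q_uniq; lia.
case: (pickP [pred z | darc y z && (z \notin rcons q y)]) => [z /andP[yz z_new] | maximal].
  apply: (IH (rcons q y) z); first by rewrite size_rcons; lia.
    by rewrite -cats1 cat_rcons sorted_cat_cons /= andbT q_sorted.
  by rewrite rcons_uniq z_new.
exists q, y; split=> // z yz; move: (maximal z); rewrite /= yz mem_rcons inE.
by case/negbFE/orP => [/eqP zy | //]; move: yz; rewrite zy darc_irr.
Qed.

Lemma chorded_path_of_maximal_path (D : digraph) k (q : seq D) (y : D) :
  0 < k -> k <= outdeg y -> sorted (@darc D) (rcons q y) -> uniq (rcons q y) ->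
  (forall z, darc y z -> z \in q) ->
  exists s, [/\ k <= size s, path (@darc D) y s, uniq (y :: s) & darc y (last y s)].
Proof.
move=> k_gt0 k_le_out qy_sorted qy_uniq out_q.
set N := [set z | darc y z].
have [z0] : exists z0, z0 \in N by apply/card_gt0P; apply: leq_trans k_le_out.
rewrite inE => yz0.
have q_sorted : sorted (@darc D) q by move: qy_sorted; rewrite -cats1 => /cat_sorted2[].
move: qy_uniq; rewrite rcons_uniq => /andP[y_notin_q q_uniq].
set i := find (darc y) q; set t := drop i q.
have has_q : has (darc y) q by apply/hasP; exists z0; rewrite ?out_q.
have i_lt : i < size q by rewrite -has_find.
have t_cons : t = nth y q i :: drop i.+1 q := drop_nth y i_lt.
have t_sorted : sorted (@darc D) t := drop_sorted i q_sorted.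
have N_t : {subset N <= t}.
  move=> z; rewrite inE => yz; have := out_q z yz.
  rewrite -(cat_take_drop i q) mem_cat => /orP[/(nthP y)[j] | //].
  rewrite size_take_min => j_lt nth_j; move: yz.
  by rewrite -nth_j nth_take ?before_find //; move: j_lt; rewrite leq_min => /andP[].
have [z] := exists_late_mem N_t (leq_trans k_gt0 k_le_out).
rewrite inE => yz z_late.
have z_t : z \in t by apply: N_t; rewrite inE.
exists (take (index z t).+1 t); split.
- by rewrite size_takel ?index_mem //; apply: leq_trans z_late.
- rewrite t_cons /= nth_find //=; apply/take_path.
  by rewrite t_cons in t_sorted.
- rewrite /= take_uniq ?drop_uniq // andbT.
  by apply: contra y_notin_q => /mem_take /mem_drop.
- by rewrite -nth_last size_takel ?index_mem //= nth_take // nth_index.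
Qed.

Lemma subdivision_C_k1_of_delta_plus (D : digraph) k :
  0 < k -> k <= delta_plus D -> contains_subdivision (@CA k 1) D.
Proof.
move=> k_gt0 /bigminn_geP[k_le_D k_le_out].
have [x _] : exists x : D, x \in D by apply/card_gt0P; apply: leq_trans k_le_D.
have [q [y [qy_sorted qy_uniq out_q]]] := exists_maximal_path x.
have [s [k_le_s ys_path ys_uniq chord]] :=
  chorded_path_of_maximal_path k_gt0 (k_le_out y) qy_sorted qy_uniq out_q.
exact: subdivision_of_chorded_path k_gt0 k_le_s ys_path ys_uniq chord.
Qed.

Lemma card_le_of_subdivision (FV : finType) (FA : rel FV) (D : digraph) :
  contains_subdivision FA D -> #|FV| <= #|D|.
Proof. by case=> f [_ [f_inj _ _]]; apply: leq_card f_inj. Qed.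

Lemma complete_digraph_irr n : irreflexive (fun u v : 'I_n => u != v).
Proof. by move=> u; rewrite eqxx. Qed.

Definition complete_digraph n : digraph := Digraph (@complete_digraph_irr n).

Lemma outdeg_complete n (v : complete_digraph n) : outdeg v = n.-1.
Proof.
rewrite /outdeg -[n in n.-1]card_ord -(cardsC1 v).
by apply: eq_card => w; rewrite !inE eq_sym.
Qed.

Lemma indeg_complete n (v : complete_digraph n) : indeg v = n.-1.
Proof.
rewrite /indeg -[n in n.-1]card_ord -(cardsC1 v).
by apply: eq_card => w; rewrite !inE.
Qed.

Lemma delta_zero_complete n : n.-1 <= delta_zero (complete_digraph n).
Proof.
rewrite leq_min; apply/andP; split; apply/bigminn_geP.
  by split=> [|v]; rewrite ?outdeg_complete ?card_ord ?leq_pred.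
by split=> [|v]; rewrite ?indeg_complete ?card_ord ?leq_pred.
Qed.

Theorem proposition26 (k : nat) (hk : 0 < k) :
  is_mad delta_plus (@CA k 1) k /\ is_mad delta_zero (@CA k 1) k.
Proof.
have upper : mad_prop delta_plus (@CA k 1) k.
  by move=> D; apply: subdivision_C_k1_of_delta_plus.
have lower (gamma : digraph -> nat) :
    (forall D, delta_zero D <= gamma D) -> forall c, mad_prop gamma (@CA k 1) c -> k <= c.
  move=> gamma_ge c mad_c; rewrite leqNgt; apply/negP => c_lt_k.
  have c_le : c <= gamma (complete_digraph k).
    by apply: leq_trans (gamma_ge _); apply: leq_trans (delta_zero_complete k); lia.
  by have := card_le_of_subdivision (mad_c _ c_le); rewrite /CV !card_ord; lia.
split; split.
- exact: upper.
- by apply: lower => D; apply: geq_minl.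
- by move=> D /leq_trans/(_ (geq_minl _ _)); apply: upper.
- exact: lower.
Qed.
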